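(* Let $n,k$ be positive integers with $n \geq 3(n-k)$ and $n\geq k$, and let $C\in\mathcal{K}_k(n)$. Let $M_{n,k}=\{k+1,k+2,\dots,2n-k\}$. Then exactly $n-k$ chords of $C$ have their start point in $M_{n,k}$, and exactly $n-k$ chords of $C$ have their end point in $M_{n,k}$.
   Context: A linear chord diagram of size $n$ is a partition of $\{1,2,\dots,2n\}$ into blocks of size two, called chords. For a chord $c=\{s_c,e_c\}$ with $s_c<e_c$, $s_c$ is its start point, $e_c$ its end point, and its length is $e_c-s_c$. $\mathcal{K}_k(n)$ is the set of all linear chord diagrams of size $n$ in which every chord has length at least $k$. *)

From mathcomp Require Import all_boot.
Set Implicit Arguments. Unset Strict Implicit. Unset Printing Implicit Defensive.

(* Points 1..2n are represented by i : 'I_(2n), where i stands for the point i.+1. *)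
Definition pt (n : nat) (i : 'I_(2 * n)) : nat := (val i).+1.

Definition chord_diagram (n : nat) (C : {set {set 'I_(2 * n)}}) : Prop :=
  partition C [set: 'I_(2 * n)] /\ (forall c, c \in C -> #|c| = 2).

Definition start_pt (n : nat) (c : {set 'I_(2 * n)}) : nat :=
  \big[minn/(2 * n).+1]_(i in c) pt i.
Definition end_pt (n : nat) (c : {set 'I_(2 * n)}) : nat :=
  \max_(i in c) pt i.

Definition in_K (k n : nat) (C : {set {set 'I_(2 * n)}}) : Prop :=
  chord_diagram C /\ (forall c, c \in C -> k <= end_pt c - start_pt c).

Definition M_set (n k : nat) : pred nat := fun m => (k < m) && (m <= 2 * n - k).

(* Every chord has length at least k, so a point among 1..k can only be the
   start of its chord and two such points never share a chord: the chords
   starting in 1..k are in bijection with these k points.  No chord starts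
   after 2n-k, so the n-k remaining chords are exactly those starting in
   M_{n,k}.  End points are handled symmetrically with the points
   2n-k+1..2n. *)

From HB Require Import structures.
From mathcomp Require Import all_boot zify.
Set Implicit Arguments. Unset Strict Implicit.

(* minn has no unit on nat: a commutative semigroup law is what bigD1 needs on start_pt. *)
HB.instance Definition _ := SemiGroup.isComLaw.Build nat minn minnA minnC.

Lemma card_ord_lt m k : k <= m -> #|[set i : 'I_m | i < k]| = k.
Proof.
move=> km; have -> : [set i : 'I_m | i < k] = widen_ord km @: [set: 'I_k].
  apply/setP => i; rewrite !inE; apply/idP/imsetP => [ik | [j _ ->]].
  - by exists (Ordinal ik) => //; apply: val_inj.
  - by rewrite /= ltn_ord.
by rewrite card_imset ?cardsT ?card_ord // => i j /(congr1 val) /= /val_inj.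
Qed.

Lemma card_ord_ge_sub m k : k <= m -> #|[set i : 'I_m | m - k <= i]| = k.
Proof.
move=> km; have -> : [set i : 'I_m | m - k <= i] = ~: [set i : 'I_m | i < m - k].
  by apply/setP => i; rewrite !inE -leqNgt.
by rewrite cardsCs setCK card_ord card_ord_lt ?leq_subr // subKn.
Qed.

Lemma disjoint_set2 (T : finType) (a b : T) (A : {set T}) :
  [disjoint [set a; b] & A] = (a \notin A) && (b \notin A).
Proof. by rewrite disjoints_subset subUset !sub1set !inE. Qed.

Lemma card_set2I_le1 (T : finType) (a b : T) (A : {set T}) :
  ~~ ((a \in A) && (b \in A)) -> #|[set a; b] :&: A| <= 1.
Proof.
move=> not_both; apply/card_le1_eqP => x y; rewrite !inE.
by case/andP => /orP[]/eqP-> xA /andP[/orP[]/eqP-> yA] //; rewrite xA yA in not_both.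
Qed.

Lemma card_partition_pairs (T : finType) (P : {set {set T}}) (D : {set T}) :
  partition P D -> {in P, forall B : {set T}, #|B| = 2} -> #|D| = 2 * #|P|.
Proof.
move=> partP P2; rewrite (card_partition partP) (eq_bigr (fun _ => 2)) //.
by rewrite sum_nat_const mulnC.
Qed.

Lemma card_blocks_disjoint (T : finType) (P : {set {set T}}) (A : {set T}) :
  partition P [set: T] -> {in P, forall B : {set T}, #|B :&: A| <= 1} ->
  #|[set B in P | [disjoint B & A]]| = #|P| - #|A|.
Proof.
move=> partP le1; have [/eqP coverP trivP _] := and3P partP.
have inP x : pblock P x \in P by rewrite pblock_mem // coverP inE.
have in_pblock x : x \in pblock P x by rewrite mem_pblock coverP inE.
have meetE : [set B in P | ~~ [disjoint B & A]] = pblock P @: A.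
  apply/setP => B; rewrite inE -setI_eq0.
  apply/andP/imsetP => [[BP /set0Pn[x /setIP[xB xA]]] | [x xA ->]].
  - by exists x; rewrite // (def_pblock trivP BP xB).
  - by split; last by apply/set0Pn; exists x; apply/setIP.
have pblock_inj : {in A &, injective (pblock P)}.
  move=> x y xA yA eq_xy; have /card_le1_eqP eq_in_block := le1 _ (inP x).
  have y_in_x : y \in pblock P x by rewrite eq_xy.
  by apply: eq_in_block; apply/setIP.
have avoidE : P :\: [set B : {set T} | [disjoint B & A]] = [set B in P | ~~ [disjoint B & A]].
  by apply/setP => B; rewrite !inE andbC.
rewrite -(card_in_imset pblock_inj) -meetE -avoidE.
by rewrite -(cardsID [set B : {set T} | [disjoint B & A]] P) -setIdE addnK.
Qed.

Lemma start_pt_set2 n (a b : 'I_(2 * n)) : a < b -> start_pt [set a; b] = a.+1.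
Proof.
move=> ab; rewrite /start_pt (bigD1 a) ?inE ?eqxx //= (@big_pred1_id _ _ _ _ b) => [|i].
  by rewrite /pt /=; have := ltn_ord b; lia.
by rewrite !inE; case: eqP => [->|]; rewrite ?andbT // andbF eq_sym -val_eqE gtn_eqF.
Qed.

Lemma end_pt_set2 n (a b : 'I_(2 * n)) : a < b -> end_pt [set a; b] = b.+1.
Proof.
move=> ab; rewrite /end_pt (bigD1 a) ?inE ?eqxx //= (big_pred1 b) => [|i].
  by rewrite /pt /=; lia.
by rewrite !inE; case: eqP => [->|]; rewrite ?andbT // andbF eq_sym -val_eqE gtn_eqF.
Qed.

Section LongChords.

Variables (n k : nat) (C : {set {set 'I_(2 * n)}}).
Hypothesis CK : in_K k C.

(* In the numbering 1..2n of the paper: the points 1..k and 2n-k+1..2n. *)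
Definition low_pts : {set 'I_(2 * n)} := [set i : 'I_(2 * n) | i < k].
Definition high_pts : {set 'I_(2 * n)} := [set i : 'I_(2 * n) | 2 * n - k <= i].

Lemma long_chordP c : c \in C ->
  exists a b : 'I_(2 * n),
    [/\ c = [set a; b], start_pt c = a.+1, end_pt c = b.+1 & a + k <= b].
Proof.
have [[_ C2] long] := CK; move=> cC; have := long c cC.
have /cards2P [x [y [xy ->]]] : #|c| == 2 by rewrite C2.
case: (ltngtP x y) => [lt|lt|/val_inj eq_xy]; last by rewrite eq_xy eqxx in xy.
- by rewrite start_pt_set2 ?end_pt_set2 // => ?; exists x, y; split=> //; lia.
- by rewrite setUC start_pt_set2 ?end_pt_set2 // => ?; exists y, x; split=> //; lia.
Qed.

Lemma start_pt_in_M c : c \in C -> M_set n k (start_pt c) = [disjoint c & low_pts].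
Proof.
case/long_chordP=> a [b [-> -> _ long]]; rewrite disjoint_set2 !inE /M_set.
by have := ltn_ord b; lia.
Qed.

Lemma end_pt_in_M c : c \in C -> M_set n k (end_pt c) = [disjoint c & high_pts].
Proof.
case/long_chordP=> a [b [-> _ -> long]]; rewrite disjoint_set2 !inE /M_set.
by have := ltn_ord b; lia.
Qed.

Lemma card_chord_low_le1 c : c \in C -> #|c :&: low_pts| <= 1.
Proof.
by case/long_chordP=> a [b [-> _ _ long]]; apply: card_set2I_le1; rewrite !inE; lia.
Qed.

Lemma card_chord_high_le1 c : c \in C -> #|c :&: high_pts| <= 1.
Proof.
case/long_chordP=> a [b [-> _ _ long]]; apply: card_set2I_le1; rewrite !inE.
by have := ltn_ord b; lia.
Qed.

End LongChords.

Theorem lemma2 (n k : nat) (C : {set {set 'I_(2 * n)}}) :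
  0 < n -> 0 < k -> 3 * (n - k) <= n -> k <= n ->
  in_K k C ->
  #|[set c in C | M_set n k (start_pt c)]| = n - k /\
  #|[set c in C | M_set n k (end_pt c)]| = n - k.
Proof.
move=> _ _ _ kn CK; have [[partC C2] _] := CK.
have cardC : #|C| = n.
  by have := card_partition_pairs partC C2; rewrite cardsT card_ord; lia.
have k_le_2n : k <= 2 * n by lia.
split.
- have -> : [set c in C | M_set n k (start_pt c)] = [set c in C | [disjoint c & low_pts n k]].
    by apply/setP => c; rewrite !inE; apply/andb_id2l => /(start_pt_in_M CK).
  by rewrite card_blocks_disjoint // ?cardC ?card_ord_lt // => c /(card_chord_low_le1 CK).
- have -> : [set c in C | M_set n k (end_pt c)] = [set c in C | [disjoint c & high_pts n k]].
    by apply/setP => c; rewrite !inE; apply/andb_id2l => /(end_pt_in_M CK).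
  by rewrite card_blocks_disjoint // ?cardC ?card_ord_ge_sub // => c /(card_chord_high_le1 CK).
Qed.
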